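(* If $H$ is a convex subgraph of a graph $G$, then $\chi_{\mu_k}(G)\ge \chi_{\mu_k}(H)$ for every positive integer $k$.
   Context: A subgraph $H$ of $G$ is convex if for all $x,y\in V(H)$, every $x,y$-geodesic (shortest path) of $G$ lies entirely in $H$. For a positive integer $k$, a set $M\subseteq V(G)$ is a $k$-distance mutual-visibility set if for every two vertices $u,v\in M$ there exists a $u,v$-geodesic of length at most $k$ none of whose internal vertices lies in $M$. $\chi_{\mu_k}(G)$ is the minimum cardinality of a partition of $V(G)$ into $k$-distance mutual-visibility sets. *)

From mathcomp Require Import all_boot.
From mathcomp Require Import boolp.
Set Implicit Arguments. Unset Strict Implicit. Unset Printing Implicit Defensive.

(* A (sub)graph is given by a vertex set V : {set T} and an edge relation
   r : rel T on a finite type T.  A graph G on T is ([set: T], e). *)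
Section Graphs.
Variable T : finType.

(* x :: p is a walk from x to y in the graph (V, r); its length is size p. *)
Definition walk (V : {set T}) (r : rel T) (x y : T) (p : seq T) : bool :=
  [&& path r x p, last x p == y & all (fun z => z \in V) (x :: p)].

Definition geodesic (V : {set T}) (r : rel T) (x y : T) (p : seq T) : Prop :=
  walk V r x y p /\ forall q, walk V r x y q -> size p <= size q.

Definition internal (x : T) (p : seq T) : seq T := behead (belast x p).

Definition kdmv_set (V : {set T}) (r : rel T) (k : nat) (M : {set T}) : Prop :=
  forall u v, u \in M -> v \in M ->
    exists p, [/\ geodesic V r u v p, size p <= k &
                  forall w, w \in internal u p -> w \notin M].

Definition kdmv_partition (V : {set T}) (r : rel T) (k : nat)
    (P : {set {set T}}) : Prop :=
  partition P V /\ forall B, B \in P -> kdmv_set V r k B.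

(* chi_{mu_k} : the minimum cardinality of such a partition.  The default
   value #|V| is attained by the partition into singletons, so it does not
   affect the minimum. *)
Definition chi_mu (V : {set T}) (r : rel T) (k : nat) : nat :=
  \big[minn/#|V|]_(P : {set {set T}} | `[< kdmv_partition V r k P >]) #|P|.

Definition subgraph (e : rel T) (VH : {set T}) (eH : rel T) : Prop :=
  symmetric eH /\ forall x y, eH x y -> [&& x \in VH, y \in VH & e x y].

Definition convex_subgraph (e : rel T) (VH : {set T}) (eH : rel T) : Prop :=
  subgraph e VH eH /\
  forall x y, x \in VH -> y \in VH ->
    forall p, geodesic [set: T] e x y p -> walk VH eH x y p.

End Graphs.

From mathcomp Require Import all_boot order.
From mathcomp Require Import boolp.

Set Implicit Arguments. Unset Strict Implicit. Unset Printing Implicit Defensive.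

Import Order.TTheory.

(* Take a partition of G into k-distance mutual-visibility sets and intersect
   each class with V(H).  By convexity, a G-geodesic between two vertices of H
   is also an H-geodesic, of the same length; its internal vertices avoid a
   class, hence avoid the smaller trace of that class on V(H).  So the traces
   form a partition of H into k-distance mutual-visibility sets, with at most
   as many classes as the original partition. *)

(* [minn] is [Order.min] on [nat] only up to conversion, so the order-theoretic
   lemmas on [\big[min/_]] are applied at an explicit type [nat]. *)
Section ChiMu.
Variables (T : finType) (V : {set T}) (r : rel T) (k : nat).

Lemma chi_mu_le_card : chi_mu V r k <= #|V|.
Proof. exact: (@bigmin_le_id _ nat). Qed.

Lemma chi_mu_le_partition P : kdmv_partition V r k P -> chi_mu V r k <= #|P|.
Proof. by move=> partP; apply: (@bigmin_le_cond _ nat); apply: asboolT. Qed.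

Lemma leq_chi_mu m :
  m <= #|V| -> (forall P, kdmv_partition V r k P -> m <= #|P|) ->
  m <= chi_mu V r k.
Proof.
move=> le_mV le_mP; apply: (@le_bigmin _ nat) => //.
by move=> P /asboolP; apply: le_mP.
Qed.

End ChiMu.

Section TracePartition.
Variables (T : finType) (P : {set {set T}}) (D A : {set T}).
Hypotheses (partP : partition P D) (sAD : A \subset D).

Definition trace_partition := [set pblock P x :&: A | x in A].

Lemma preim_partition_pblock_trace :
  preim_partition (pblock P) A = trace_partition.
Proof.
have [/eqP coverP tiP _] := and3P partP.
apply: eq_in_imset => x Ax; apply/setP => y.
by rewrite !inE eq_pblock // ?coverP ?(subsetP sAD) // andbC.
Qed.

Lemma trace_partitionP : partition trace_partition A.
Proof. by rewrite -preim_partition_pblock_trace; apply: preim_partitionP. Qed.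

Lemma card_trace_partition : #|trace_partition| <= #|P|.
Proof.
have [/eqP coverP _ _] := and3P partP.
rewrite /trace_partition (imset_comp (fun B => B :&: A) (pblock P)).
apply: leq_trans (leq_imset_card _ _) (subset_leq_card _).
apply/subsetP => _ /imsetP[x Ax ->].
by rewrite pblock_mem // coverP (subsetP sAD).
Qed.

End TracePartition.

Section ConvexSubgraph.
Variables (T : finType) (e : rel T) (VH : {set T}) (eH : rel T) (k : nat).
Hypothesis convexH : convex_subgraph e VH eH.

Lemma convex_geodesic u v p :
  u \in VH -> v \in VH -> geodesic [set: T] e u v p -> geodesic VH eH u v p.
Proof.
have [[_ sub_eH] geoH] := convexH.
move=> uH vH geo_p; split; first exact: geoH geo_p.
move=> q /and3P[path_q last_q _]; apply: geo_p.2; apply/and3P; split=> //.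
- by apply: sub_path path_q => x y /sub_eH /and3P[].
- by apply/allP => z _; rewrite inE.
Qed.

Lemma kdmv_setI_convex M :
  kdmv_set [set: T] e k M -> kdmv_set VH eH k (M :&: VH).
Proof.
move=> visM u v /setIP[uM uH] /setIP[vM vH].
have [p [geo_p size_p avoid_p]] := visM u v uM vM.
exists p; split=> [|//|w /avoid_p wM]; first exact: convex_geodesic.
by rewrite inE negb_and wM.
Qed.

Lemma kdmv_partition_trace P :
  kdmv_partition [set: T] e k P ->
  kdmv_partition VH eH k (trace_partition P VH).
Proof.
move=> [partP visP]; split; first exact: trace_partitionP (subsetT VH).
move=> _ /imsetP[x _ ->]; apply/kdmv_setI_convex/visP.
by have [/eqP coverP _ _] := and3P partP; rewrite pblock_mem // coverP inE.
Qed.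

End ConvexSubgraph.

Theorem proposition2p5 (T : finType) (e : rel T)
  (e_sym : symmetric e) (e_irr : irreflexive e)
  (VH : {set T}) (eH : rel T) (k : nat) :
  convex_subgraph e VH eH -> 0 < k ->
  chi_mu VH eH k <= chi_mu [set: T] e k.
Proof.
move=> convexH _.
apply: leq_chi_mu => [|P visP].
  by rewrite cardsT; apply: leq_trans (chi_mu_le_card _ _ _) (max_card _).
apply: leq_trans (chi_mu_le_partition (kdmv_partition_trace convexH visP)) _.
by apply: card_trace_partition (subsetT VH); case: visP.
Qed.
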